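(* Consider Algorithm FoBa-obj with parameter $\delta>0$, and let $\beta^{(k)}$ with support $F^{(k)}$ be the iterate at the beginning of some iteration with $k\ge1$ (not necessarily the output). Then for any $\bar\beta\in\mathbb{R}^d$ with support $\bar F$, $$\|\beta^{(k)}_{F^{(k)}-\bar F}\|^2=\|(\beta^{(k)}-\bar\beta)_{F^{(k)}-\bar F}\|^2\ge\frac{\delta^{(k)}}{\rho_+(1)}|F^{(k)}-\bar F|\ge\frac{\delta}{\rho_+(1)}|F^{(k)}-\bar F|.$$
   Context: Let $Q:\mathbb{R}^d\to\mathbb{R}$ be convex and continuously differentiable. $e_j$ is the $j$-th standard basis vector, $\mathrm{supp}(\beta)=\{j:\beta_j\ne0\}$, $\|\beta\|_0=|\mathrm{supp}(\beta)|$, $\|\cdot\|$ is the Euclidean norm, $A-B$ is set difference, and $v_S$ is $v$ restricted to the coordinates in $S$. For $F\subseteq\{1,\dots,d\}$, $\hat\beta(F)$ denotes a minimizer of $Q$ over $\{\beta:\mathrm{supp}(\beta)\subseteq F\}$ (assumed to exist). For a positive integer $s$, the restricted strong convexity constants $\rho_-(s),\rho_+(s)>0$ are constants such that for all $\beta,\beta'\in\mathbb{R}^d$ with $\|\beta'-\beta\|_0\le s$: $\frac{\rho_-(s)}{2}\|\beta'-\beta\|^2\le Q(\beta')-Q(\beta)-\langle\nabla Q(\beta),\beta'-\beta\rangle\le\frac{\rho_+(s)}{2}\|\beta'-\beta\|^2.$ Algorithm FoBa has two variants: FoBa-obj (parameter $\delta>0$) and FoBa-gdt (parameter $\epsilon>0$).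 Initialize $F^{(0)}=\emptyset$, $\beta^{(0)}=0$, $k=0$, and repeat the following iteration. (1) Stopping test: FoBa-obj stops if $Q(\beta^{(k)})-\min_{\alpha\in\mathbb{R},\,j\notin F^{(k)}}Q(\beta^{(k)}+\alpha e_j)<\delta$; FoBa-gdt stops if $\|\nabla Q(\beta^{(k)})\|_\infty<\epsilon$. On stopping the output is $\beta^{(k)}$ with support $F^{(k)}$, and the algorithm is said to terminate at $k$. (2) Forward step: FoBa-obj picks $i^{(k)}\in\arg\min_{i\notin F^{(k)}}\min_\alpha Q(\beta^{(k)}+\alpha e_i)$; FoBa-gdt picks $i^{(k)}\in\arg\max_{i\notin F^{(k)}}|\nabla Q(\beta^{(k)})_i|$. Set $F^{(k+1)}=F^{(k)}\cup\{i^{(k)}\}$, $\beta^{(k+1)}=\hat\beta(F^{(k+1)})$, $\delta^{(k+1)}=Q(\beta^{(k)})-Q(\beta^{(k+1)})$, $k\leftarrow k+1$. (3) Backward step: repeat — if $F^{(k)}=\emptyset$ or $\min_{i\in F^{(k)}}Q(\beta^{(k)}-\beta^{(k)}_ie_i)-Q(\beta^{(k)})\ge\delta^{(k)}/2$, leave the backward step; otherwise pick $j\in\arg\min_{i\in F^{(k)}}Q(\beta^{(k)}-\beta^{(k)}_ie_i)$, set $F^{(k-1)}=F^{(k)}-\{j\}$, $\beta^{(k-1)}=\hat\beta(F^{(k-1)})$, $k\leftarrow k-1$ (where $\delta^{(k-1)}$ is the value recorded at the most recent forward step producing index $k-1$). Thus $|F^{(k)}|=k$ always. ''At the beginning of an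 iteration'' means the state just before a stopping test. *)

(* real analysis on R^d, modelled as nat -> R with only the
   coordinates 0..d-1 relevant (vectors of R^d are those vanishing at j >= d). *)
From Stdlib Require Import Reals Lra Lia Arith List Bool.
Import ListNotations.
Open Scope R_scope.
Open Scope bool_scope.

Definition vec := nat -> R.

Definition in_space (d : nat) (v : vec) : Prop := forall j, (d <= j)%nat -> v j = 0.

Definition vadd (u v : vec) : vec := fun j => u j + v j.
Definition vsub (u v : vec) : vec := fun j => u j - v j.
Definition vscale (a : R) (v : vec) : vec := fun j => a * v j.
Definition unitv (i : nat) : vec := fun j => if Nat.eqb j i then 1 else 0.

Definition sumd (d : nat) (f : nat -> R) : R := fold_right Rplus 0 (map f (seq 0 d)).
Definition inner (d : nat) (u v : vec) : R := sumd d (fun j => u j * v j).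
Definition vnorm (d : nat) (v : vec) : R := sqrt (inner d v v).

(* finite subsets of {0,..,d-1} as boolean predicates *)
Definition supp (d : nat) (v : vec) : nat -> bool :=
  fun j => Nat.ltb j d && (if Req_EM_T (v j) 0 then false else true).
Definition card (d : nat) (A : nat -> bool) : nat := length (filter A (seq 0 d)).
Definition setdiff (A B : nat -> bool) : nat -> bool := fun j => A j && negb (B j).
Definition l0 (d : nat) (v : vec) : nat := card d (supp d v).
Definition restrict (S : nat -> bool) (v : vec) : vec := fun j => if S j then v j else 0.

Definition convex_on (d : nat) (Q : vec -> R) : Prop :=
  forall b b' t, in_space d b -> in_space d b' -> 0 <= t <= 1 ->
    Q (vadd (vscale t b) (vscale (1 - t) b')) <= t * Q b + (1 - t) * Q b'.

Definition has_gradient (d : nat) (Q : vec -> R) (grad : vec -> vec) : Prop :=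
  forall b, in_space d b -> forall eps, 0 < eps -> exists del, 0 < del /\
    forall h, in_space d h -> vnorm d h < del ->
      Rabs (Q (vadd b h) - Q b - inner d (grad b) h) <= eps * vnorm d h.

Definition grad_continuous (d : nat) (grad : vec -> vec) : Prop :=
  forall b, in_space d b -> forall eps, 0 < eps -> exists del, 0 < del /\
    forall b', in_space d b' -> vnorm d (vsub b' b) < del ->
      vnorm d (vsub (grad b') (grad b)) < eps.

Definition RSC (d : nat) (Q : vec -> R) (grad : vec -> vec) (s : nat) (rm rp : R) : Prop :=
  0 < rm /\ 0 < rp /\
  forall b b', in_space d b -> in_space d b' -> (l0 d (vsub b' b) <= s)%nat ->
    rm / 2 * (vnorm d (vsub b' b)) ^ 2 <= Q b' - Q b - inner d (grad b) (vsub b' b) /\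
    Q b' - Q b - inner d (grad b) (vsub b' b) <= rp / 2 * (vnorm d (vsub b' b)) ^ 2.

Definition is_restricted_min (d : nat) (Q : vec -> R) (F : nat -> bool) (b : vec) : Prop :=
  in_space d b /\ (forall j, F j = false -> b j = 0) /\
  forall b', in_space d b' -> (forall j, F j = false -> b' j = 0) -> Q b <= Q b'.

Record state := mkState {
  st_k : nat;
  st_F : nat -> bool;
  st_beta : vec;
  st_delta : nat -> R
}.

Definition init_state : state := mkState 0 (fun _ => false) (fun _ => 0) (fun _ => 0).

(* Stopping test fails and forward step is performed: i attains
   min_{alpha, j notin F} Q(beta + alpha e_j) =: mi, and Q(beta) - mi >= delta. *)
Definition forward_obj (d : nat) (Q : vec -> R) (delta : R) (s s' : state) : Prop :=
  exists i a,
    (i < d)%nat /\ st_F s i = false /\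
    (forall j a', (j < d)%nat -> st_F s j = false ->
        Q (vadd (st_beta s) (vscale a (unitv i))) <= Q (vadd (st_beta s) (vscale a' (unitv j)))) /\
    ~ (Q (st_beta s) - Q (vadd (st_beta s) (vscale a (unitv i))) < delta) /\
    st_k s' = S (st_k s) /\
    (forall j, st_F s' j = st_F s j || Nat.eqb j i) /\
    is_restricted_min d Q (st_F s') (st_beta s') /\
    (forall m, st_delta s' m =
        if Nat.eqb m (S (st_k s)) then Q (st_beta s) - Q (st_beta s') else st_delta s m).

Definition backward_exit (Q : vec -> R) (s : state) : Prop :=
  (forall j, st_F s j = false) \/
  (forall i, st_F s i = true ->
     Q (vadd (st_beta s) (vscale (- st_beta s i) (unitv i))) - Q (st_beta s)
       >= st_delta s (st_k s) / 2).

Definition backward_remove (d : nat) (Q : vec -> R) (s s' : state) : Prop :=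
  exists j,
    st_F s j = true /\
    (forall i, st_F s i = true ->
       Q (vadd (st_beta s) (vscale (- st_beta s j) (unitv j)))
         <= Q (vadd (st_beta s) (vscale (- st_beta s i) (unitv i)))) /\
    Q (vadd (st_beta s) (vscale (- st_beta s j) (unitv j))) - Q (st_beta s)
       < st_delta s (st_k s) / 2 /\
    st_k s = S (st_k s') /\
    (forall i, st_F s' i = st_F s i && negb (Nat.eqb i j)) /\
    is_restricted_min d Q (st_F s') (st_beta s') /\
    (forall m, st_delta s' m = st_delta s m).

(* foba_reach d Q delta true s  : s is a state at the beginning of an iteration;
   foba_reach d Q delta false s : s is a state inside a backward step. *)
Inductive foba_reach (d : nat) (Q : vec -> R) (delta : R) : bool -> state -> Prop :=
| fr_init : foba_reach d Q delta true init_state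
| fr_fwd : forall s s', foba_reach d Q delta true s -> forward_obj d Q delta s s' ->
    foba_reach d Q delta false s'
| fr_bwd : forall s s', foba_reach d Q delta false s -> backward_remove d Q s s' ->
    foba_reach d Q delta false s'
| fr_exit : forall s, foba_reach d Q delta false s -> backward_exit Q s ->
    foba_reach d Q delta true s.

From Stdlib Require Import Reals Lra Lia Arith List Bool.
Open Scope R_scope.

(* Let s be a state of FoBa-obj at the beginning of an iteration with k >= 1.
   Such a state was produced by leaving a backward step, so the backward exit
   condition holds: removing any coordinate i of F^(k) from beta = beta^(k)
   costs at least delta^(k)/2 in the objective.  On the other hand beta is the
   minimizer of Q over vectors supported in F^(k), hence its gradient vanishes
   on F^(k), and restricted smoothness rho_+(1) bounds the same cost from above
   by rho_+(1)/2 * beta_i^2.  Thus beta_i^2 >= delta^(k)/rho_+(1) on F^(k), and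
   summing over F^(k) - supp(bbar), where beta - bbar and beta coincide, gives
   the middle inequality.  Finally every recorded gain delta^(m) is >= delta,
   because a forward step is only taken when the stopping test fails.
   Only the upper (smoothness) half of RSC at sparsity 1 is needed. *)

Lemma fold_Rplus_init (a : R) (l : list R) :
  fold_right Rplus a l = fold_right Rplus 0 l + a.
Proof. induction l as [|x l IH]; simpl; [ring | rewrite IH; ring]. Qed.

Lemma sumd_S (d : nat) (f : nat -> R) : sumd (S d) f = sumd d f + f d.
Proof.
  unfold sumd. rewrite seq_S, map_app, fold_right_app. simpl.
  rewrite fold_Rplus_init. ring.
Qed.

Lemma card_S (d : nat) (A : nat -> bool) :
  card (S d) A = (card d A + (if A d then 1 else 0))%nat.
Proof.
  unfold card. rewrite seq_S, filter_app, length_app. simpl. destruct (A d); reflexivity.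
Qed.

Lemma sumd_ext (d : nat) (f g : nat -> R) :
  (forall j, (j < d)%nat -> f j = g j) -> sumd d f = sumd d g.
Proof.
  induction d as [|d IH]; intros Hfg; [reflexivity|].
  rewrite !sumd_S, (Hfg d) by lia.
  rewrite IH; [reflexivity|]. intros j Hj. apply Hfg. lia.
Qed.

Lemma sumd_le (d : nat) (f g : nat -> R) :
  (forall j, (j < d)%nat -> f j <= g j) -> sumd d f <= sumd d g.
Proof.
  induction d as [|d IH]; intros Hfg; [unfold sumd; simpl; lra|].
  rewrite !sumd_S.
  assert (sumd d f <= sumd d g) by (apply IH; intros; apply Hfg; lia).
  assert (f d <= g d) by (apply Hfg; lia). lra.
Qed.

Lemma sumd_indicator (d : nat) (A : nat -> bool) (c : R) :
  sumd d (fun j => if A j then c else 0) = c * INR (card d A).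
Proof.
  induction d as [|d IH]; [unfold sumd; simpl; ring|].
  rewrite sumd_S, card_S, plus_INR, IH. destruct (A d); simpl; ring.
Qed.

Lemma sumd_single (d : nat) (f : nat -> R) (i : nat) :
  (forall j, j <> i -> f j = 0) -> sumd d f = if Nat.ltb i d then f i else 0.
Proof.
  intros Hf. induction d as [|d IH]; [reflexivity|].
  rewrite sumd_S, IH.
  destruct (Nat.lt_trichotomy i d) as [Hlt | [-> | Hgt]].
  - rewrite (proj2 (Nat.ltb_lt i d)), (proj2 (Nat.ltb_lt i (S d))), (Hf d) by lia. ring.
  - rewrite (proj2 (Nat.ltb_ge d d)), (proj2 (Nat.ltb_lt d (S d))) by lia. ring.
  - rewrite (proj2 (Nat.ltb_ge i d)), (proj2 (Nat.ltb_ge i (S d))), (Hf d) by lia. ring.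
Qed.

Lemma card_single (d : nat) (A : nat -> bool) (i : nat) :
  (forall j, A j = true -> j = i) -> (card d A <= if Nat.ltb i d then 1 else 0)%nat.
Proof.
  intros HA. induction d as [|d IH]; [unfold card; simpl; lia|].
  rewrite card_S. destruct (A d) eqn:Ed.
  - apply HA in Ed; subst d.
    rewrite (proj2 (Nat.ltb_ge i i)) in IH by lia.
    rewrite (proj2 (Nat.ltb_lt i (S i))) by lia. lia.
  - destruct (Nat.ltb_spec i d); destruct (Nat.ltb_spec i (S d)); lia.
Qed.

Lemma inner_self_nonneg (d : nat) (v : vec) : 0 <= inner d v v.
Proof.
  unfold inner. induction d as [|d IH]; [unfold sumd; simpl; lra|].
  rewrite sumd_S. pose proof (Rle_0_sqr (v d)). unfold Rsqr in *. lra.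
Qed.

Lemma vnorm_sq (d : nat) (v : vec) : vnorm d v ^ 2 = inner d v v.
Proof. unfold vnorm. rewrite <- Rsqr_pow2. apply Rsqr_sqrt, inner_self_nonneg. Qed.

Lemma vnorm_ext (d : nat) (u v : vec) :
  (forall j, (j < d)%nat -> u j = v j) -> vnorm d u = vnorm d v.
Proof.
  intros Huv. unfold vnorm, inner. f_equal. apply sumd_ext.
  intros j Hj. rewrite Huv by exact Hj. reflexivity.
Qed.

Lemma vnorm_restrict_sq_lower (d : nat) (S : nat -> bool) (v : vec) (c : R) :
  (forall j, (j < d)%nat -> S j = true -> c <= v j * v j) ->
  c * INR (card d S) <= vnorm d (restrict S v) ^ 2.
Proof.
  intros Hc. rewrite vnorm_sq, <- sumd_indicator. unfold inner. apply sumd_le.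
  intros j Hj. unfold restrict. destruct (S j) eqn:HS; [apply Hc|]; auto; lra.
Qed.

Section SingleCoordinate.
Variables (d i : nat) (h : vec).
Hypothesis Hi : (i < d)%nat.
Hypothesis Hh : forall j, j <> i -> h j = 0.

Lemma inner_single (g : vec) : inner d g h = g i * h i.
Proof.
  unfold inner. rewrite (sumd_single d _ i), (proj2 (Nat.ltb_lt i d)); [reflexivity | exact Hi |].
  intros j Hj. rewrite (Hh j Hj). ring.
Qed.

Lemma vnorm_sq_single : vnorm d h ^ 2 = h i * h i.
Proof. rewrite vnorm_sq. apply inner_single. Qed.

Lemma l0_single : (l0 d h <= 1)%nat.
Proof.
  unfold l0. eapply Nat.le_trans; [apply (card_single d _ i) | destruct (Nat.ltb i d); lia].
  intros j Hj. destruct (Nat.eq_dec j i) as [|Hne]; [assumption|].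
  unfold supp in Hj. rewrite (Hh j Hne) in Hj.
  destruct (Req_EM_T 0 0); [|congruence]. rewrite andb_false_r in Hj. discriminate.
Qed.
End SingleCoordinate.

Definition coord_step (b : vec) (t : R) (i : nat) : vec := vadd b (vscale t (unitv i)).

Lemma coord_step_diff (b : vec) (t : R) (i j : nat) :
  vsub (coord_step b t i) b j = if Nat.eqb j i then t else 0.
Proof. unfold vsub, coord_step, vadd, vscale, unitv. destruct (Nat.eqb j i); ring. Qed.

Lemma coord_step_space (d : nat) (b : vec) (t : R) (i : nat) :
  in_space d b -> (i < d)%nat -> in_space d (coord_step b t i).
Proof.
  intros Hb Hi j Hj. unfold coord_step, vadd, vscale, unitv.
  rewrite Hb, (proj2 (Nat.eqb_neq j i)) by lia. ring.
Qed.

Lemma coord_step_supported (F : nat -> bool) (b : vec) (t : R) (i : nat) :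
  (forall j, F j = false -> b j = 0) -> F i = true ->
  forall j, F j = false -> coord_step b t i j = 0.
Proof.
  intros Hb HFi j Hj. unfold coord_step, vadd, vscale, unitv. rewrite Hb by exact Hj.
  destruct (Nat.eqb_spec j i); [congruence | ring].
Qed.

Lemma rsc_coord_upper (d : nat) (Q : vec -> R) (grad : vec -> vec) (rm rp : R)
  (b : vec) (t : R) (i : nat) :
  RSC d Q grad 1 rm rp -> in_space d b -> (i < d)%nat ->
  Q (coord_step b t i) - Q b - grad b i * t <= rp / 2 * (t * t).
Proof.
  intros [_ [_ Hrsc]] Hb Hi.
  set (h := vsub (coord_step b t i) b).
  assert (Hoff : forall j, j <> i -> h j = 0).
  { intros j Hj. unfold h. rewrite coord_step_diff, (proj2 (Nat.eqb_neq j i)); auto. }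
  assert (Hhi : h i = t) by (unfold h; rewrite coord_step_diff, Nat.eqb_refl; reflexivity).
  destruct (Hrsc b (coord_step b t i) Hb (coord_step_space d b t i Hb Hi)
              (l0_single d i h Hi Hoff)) as [_ Hup].
  fold h in Hup. rewrite (inner_single d i h Hi Hoff), (vnorm_sq_single d i h Hi Hoff), Hhi in Hup.
  exact Hup.
Qed.

(* First-order optimality: the minimizer of Q over vectors supported in F has
   zero partial derivatives on F (a nonzero one would allow a descent step). *)
Lemma restricted_min_grad_zero (d : nat) (Q : vec -> R) (grad : vec -> vec) (rm rp : R)
  (F : nat -> bool) (b : vec) (i : nat) :
  RSC d Q grad 1 rm rp -> is_restricted_min d Q F b -> (i < d)%nat -> F i = true ->
  grad b i = 0.
Proof.
  intros Hrsc [Hb [HbF Hmin]] Hi HFi.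
  pose proof Hrsc as [_ [Hrp _]].
  set (g := grad b i). set (t := - g / rp).
  assert (Hopt : Q b <= Q (coord_step b t i)).
  { apply Hmin; [apply coord_step_space | apply coord_step_supported]; auto. }
  pose proof (rsc_coord_upper d Q grad rm rp b t i Hrsc Hb Hi) as Hup. fold g in Hup.
  assert (Hdescent : g * t + rp / 2 * (t * t) = - (g * g) / (2 * rp))
    by (unfold t; field; lra).
  assert (Hsq : 0 <= - (g * g) / (2 * rp)) by lra.
  assert (g * g <= 0).
  { replace (g * g) with (- (- (g * g) / (2 * rp)) * (2 * rp)) by (field; lra). nra. }
  nra.
Qed.

Lemma removal_cost_upper (d : nat) (Q : vec -> R) (grad : vec -> vec) (rm rp : R)
  (F : nat -> bool) (b : vec) (i : nat) :
  RSC d Q grad 1 rm rp -> is_restricted_min d Q F b -> (i < d)%nat -> F i = true ->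
  Q (coord_step b (- b i) i) - Q b <= rp / 2 * (b i * b i).
Proof.
  intros Hrsc Hmin Hi HFi.
  pose proof (rsc_coord_upper d Q grad rm rp b (- b i) i Hrsc (proj1 Hmin) Hi) as Hup.
  rewrite (restricted_min_grad_zero d Q grad rm rp F b i Hrsc Hmin Hi HFi) in Hup. lra.
Qed.

(* The gain recorded by a forward step is at least delta: the stopping test
   failed, and beta^(k+1) does at least as well as the chosen coordinate step. *)
Lemma forward_gain_ge (d : nat) (Q : vec -> R) (delta : R) (s s' : state) :
  in_space d (st_beta s) -> (forall j, st_F s j = false -> st_beta s j = 0) ->
  forward_obj d Q delta s s' ->
  st_delta s' (st_k s') = Q (st_beta s) - Q (st_beta s') /\
  Q (st_beta s) - Q (st_beta s') >= delta.
Proof.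
  intros Hb HbF [i [a [Hi [_ [_ [Hnot [Hk [HF [[_ [_ Hmin]] Hdel]]]]]]]]].
  rewrite Hdel, Hk, Nat.eqb_refl. split; [reflexivity|].
  assert (Q (st_beta s') <= Q (coord_step (st_beta s) a i)).
  { apply Hmin.
    - apply coord_step_space; assumption.
    - apply (coord_step_supported (st_F s')); [|rewrite HF, Nat.eqb_refl, orb_true_r; auto].
      intros j Hj. rewrite HF in Hj. apply orb_false_iff in Hj as [Hj _]. auto. }
  unfold coord_step in *. lra.
Qed.

Definition foba_invariant (d : nat) (Q : vec -> R) (delta : R) (s : state) : Prop :=
  in_space d (st_beta s) /\ (forall j, st_F s j = false -> st_beta s j = 0) /\
  (forall m, (1 <= m <= st_k s)%nat -> st_delta s m >= delta) /\
  ((1 <= st_k s)%nat -> is_restricted_min d Q (st_F s) (st_beta s)).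

Lemma foba_reach_invariant (d : nat) (Q : vec -> R) (delta : R) (b : bool) (s : state) :
  foba_reach d Q delta b s -> foba_invariant d Q delta s.
Proof.
  induction 1 as [| s s' _ IH Hfwd | s s' _ IH Hbwd | s _ IH _].
  - unfold foba_invariant; simpl.
    split; [intros j _; reflexivity | split; [intros j _; reflexivity | split; intros; lia]].
  - destruct IH as [Hb [HbF [Hgains _]]].
    destruct (forward_gain_ge d Q delta s s' Hb HbF Hfwd) as [Hnew Hge].
    destruct Hfwd as [_ [_ [_ [_ [_ [_ [Hk [_ [Hmin Hdel]]]]]]]]].
    split; [apply Hmin | split; [apply Hmin | split; [| intros _; exact Hmin]]].
    intros m Hm. rewrite Hk in Hm, Hnew.
    destruct (Nat.eq_dec m (S (st_k s))) as [-> | Hne]; [lra|].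
    rewrite Hdel, (proj2 (Nat.eqb_neq m (S (st_k s))) Hne). apply Hgains. lia.
  - destruct IH as [_ [_ [Hgains _]]].
    destruct Hbwd as [_ [_ [_ [_ [Hk [_ [Hmin Hdel]]]]]]].
    split; [apply Hmin | split; [apply Hmin | split; [| intros _; exact Hmin]]].
    intros m Hm. rewrite Hdel. apply Hgains. lia.
  - exact IH.
Qed.

(* At the beginning of an iteration with k >= 1 the algorithm has just left a
   backward step, so the backward exit condition holds. *)
Lemma iteration_start_exit (d : nat) (Q : vec -> R) (delta : R) (s : state) :
  foba_reach d Q delta true s -> (1 <= st_k s)%nat -> backward_exit Q s.
Proof. intros Hs Hk. inversion Hs; subst; [simpl in Hk; lia | assumption]. Qed.

(* Every coordinate of a state leaving the backward step is large:
   delta^(k)/2 <= removal cost <= rp/2 * beta_j^2. *)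
Lemma exit_coord_lower (d : nat) (Q : vec -> R) (grad : vec -> vec) (rm rp : R)
  (s : state) (j : nat) :
  RSC d Q grad 1 rm rp -> is_restricted_min d Q (st_F s) (st_beta s) ->
  backward_exit Q s -> (j < d)%nat -> st_F s j = true ->
  st_delta s (st_k s) / rp <= st_beta s j * st_beta s j.
Proof.
  intros Hrsc Hmin [Hempty | Hexit] Hj HFj; [rewrite Hempty in HFj; discriminate|].
  pose proof Hrsc as [_ [Hrp _]].
  pose proof (removal_cost_upper d Q grad rm rp _ _ j Hrsc Hmin Hj HFj) as Hup.
  specialize (Hexit j HFj). unfold coord_step in Hup.
  apply (Rmult_le_reg_r rp); [exact Hrp|].
  replace (st_delta s (st_k s) / rp * rp) with (st_delta s (st_k s)) by (field; lra).
  lra.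
Qed.

Lemma restrict_sub_outside_support (d : nat) (A : nat -> bool) (b bbar : vec) :
  vnorm d (restrict (setdiff A (supp d bbar)) b)
  = vnorm d (restrict (setdiff A (supp d bbar)) (vsub b bbar)).
Proof.
  apply vnorm_ext. intros j Hj. unfold restrict, setdiff, supp, vsub.
  rewrite (proj2 (Nat.ltb_lt j d) Hj). simpl.
  destruct (Req_EM_T (bbar j) 0) as [-> | _]; destruct (A j); simpl; ring.
Qed.

Theorem mainTheorem8 (d : nat) (Q : vec -> R) (grad : vec -> vec) (rm1 rp1 delta : R)
  (Hconv : convex_on d Q) (Hgrad : has_gradient d Q grad) (Hcont : grad_continuous d grad)
  (Hrsc : RSC d Q grad 1 rm1 rp1)
  (Hmin_exists : forall F : nat -> bool, exists b, is_restricted_min d Q F b)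
  (Hdelta : 0 < delta)
  (s : state) (Hs : foba_reach d Q delta true s) (Hk : (1 <= st_k s)%nat)
  (bbar : vec) (Hbbar : in_space d bbar) :
  let Fk := st_F s in
  let bk := st_beta s in
  let D := setdiff Fk (supp d bbar) in
  (vnorm d (restrict D bk)) ^ 2 = (vnorm d (restrict D (vsub bk bbar))) ^ 2 /\
  (vnorm d (restrict D (vsub bk bbar))) ^ 2 >= st_delta s (st_k s) / rp1 * INR (card d D) /\
  st_delta s (st_k s) / rp1 * INR (card d D) >= delta / rp1 * INR (card d D).
Proof.
  intros Fk bk D.
  pose proof Hrsc as [_ [Hrp _]].
  destruct (foba_reach_invariant d Q delta true s Hs) as [_ [_ [Hgains Hmin]]].
  specialize (Hmin Hk).
  assert (Hgain : st_delta s (st_k s) >= delta) by (apply Hgains; lia).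
  assert (Hcoord : forall j, (j < d)%nat -> D j = true ->
                     st_delta s (st_k s) / rp1 <= bk j * bk j).
  { intros j Hj HDj. apply andb_true_iff in HDj as [HFj _].
    exact (exit_coord_lower d Q grad rm1 rp1 s j Hrsc Hmin
             (iteration_start_exit d Q delta s Hs Hk) Hj HFj). }
  assert (Heq := restrict_sub_outside_support d Fk bk bbar). fold D in Heq.
  split; [|split]; [now rewrite Heq | |].
  - rewrite <- Heq. apply Rle_ge, vnorm_restrict_sq_lower, Hcoord.
  - apply Rle_ge, Rmult_le_compat_r; [apply pos_INR|].
    apply Rmult_le_compat_r; [left; apply Rinv_0_lt_compat|]; lra.
Qed.
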